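(* There exist absolute constants $c_1,c_2>0$ such that for every sufficiently large $n$ there exists a monotone non-negative $\frac{c_1}{n}$-Lipschitz submodular function $f\colon\mathbb F_2^n\to[0,1]$ (a rescaled matroid rank function) with $R^{\to}_{1/3}(f^+)\ge c_2 n$.
   Context: Functions $f\colon 2^{[n]}\to\mathbb R$ are identified with functions on $\mathbb F_2^n$ via $x\leftrightarrow\{i:x_i=1\}$. $f$ is monotone if $f(A)\le f(B)$ for $A\subseteq B$; $\alpha$-Lipschitz if $|f(S\cup\{i\})-f(S)|\le\alpha$ for all $S$, $i$; submodular if $f(A\cup\{i\})-f(A)\ge f(B\cup\{i\})-f(B)$ for all $A\subseteq B\subseteq[n]$, $i\notin B$. The XOR-function of $f$ is $f^+(x,y)=f(x+y)$ (coordinatewise addition mod 2). Randomized one-way communication complexity: $R^{\to}_\delta(f^+)$ is the minimum, over public-coin randomized protocols in which Alice (holding $x\in\mathbb F_2^n$) sends a single message to Bob (holding $y\in\mathbb F_2^n$) who then outputs a value, such that for every $x,y$ Bob's output equals $f^+(x,y)$ with probability at least $1-\delta$, of the maximum message length in bits. *)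

From mathcomp Require Import all_boot.
From Stdlib Require Import Reals.
Set Implicit Arguments. Unset Strict Implicit. Unset Printing Implicit Defensive.

Local Open Scope R_scope.

(* Vectors of F_2^n, identified with subsets of [n] = 'I_n via x <-> {i | x_i = 1}. *)
Definition F2vec (n : nat) := {ffun 'I_n -> bool}.

Definition addF2 (n : nat) (x y : F2vec n) : F2vec n := [ffun i => x i (+) y i].

Definition supp (n : nat) (x : F2vec n) : {set 'I_n} := [set i | x i].

Definition monotone_sf (n : nat) (f : {set 'I_n} -> R) : Prop :=
  forall A B : {set 'I_n}, A \subset B -> f A <= f B.

Definition lipschitz_sf (n : nat) (alpha : R) (f : {set 'I_n} -> R) : Prop :=
  forall (S : {set 'I_n}) (i : 'I_n), Rabs (f (i |: S) - f S) <= alpha.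

Definition submodular_sf (n : nat) (f : {set 'I_n} -> R) : Prop :=
  forall (A B : {set 'I_n}) (i : 'I_n), A \subset B -> i \notin B ->
    f (i |: A) - f A >= f (i |: B) - f B.

Definition xor_fun (n : nat) (f : {set 'I_n} -> R) (x y : F2vec n) : R :=
  f (supp (addF2 x y)).

(* A public-coin randomized one-way protocol: the public randomness is a finite
   probability space (Omega, mu); Alice, holding x, sends the message
   (a bit string) Alice w x; Bob, holding y, outputs Bob w m y. *)
Record protocol (n : nat) := Protocol {
  Omega : finType;
  mu : Omega -> R;
  Alice : Omega -> F2vec n -> seq bool;
  Bob : Omega -> seq bool -> F2vec n -> R
}.

Definition is_distribution (n : nat) (P : protocol n) : Prop :=
  (forall w, 0 <= @mu n P w) /\ \big[Rplus/0]_(w : @Omega n P) @mu n P w = 1.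

Definition prob_correct (n : nat) (P : protocol n) (F : F2vec n -> F2vec n -> R)
    (x y : F2vec n) : R :=
  \big[Rplus/0]_(w : @Omega n P)
     (if Req_EM_T (@Bob n P w (@Alice n P w x) y) (F x y) then @mu n P w else 0).

Definition computes_with_error (n : nat) (P : protocol n) (delta : R)
    (F : F2vec n -> F2vec n -> R) : Prop :=
  is_distribution P /\ forall x y, prob_correct P F x y >= 1 - delta.

Definition cost (n : nat) (P : protocol n) : nat :=
  \max_(w : @Omega n P) \max_(x : F2vec n) size (@Alice n P w x).

(* R^->_delta(F) >= m, i.e. every valid protocol has cost at least m. *)
Definition oneway_cc_ge (n : nat) (delta : R) (F : F2vec n -> F2vec n -> R)
    (m : R) : Prop :=
  forall P : protocol n, computes_with_error P delta F -> m <= INR (cost P).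

From Stdlib Require Import Reals Lra.
From HB Require Import structures.
From mathcomp Require Import all_boot.
From mathcomp Require Import zify.
Set Implicit Arguments. Unset Strict Implicit. Unset Printing Implicit Defensive.
Local Open Scope R_scope.

(* The witness is f(S) = |S|/n, the rank function of the free matroid on [n]
   rescaled to [0,1]: it is monotone, submodular and 1/n-Lipschitz, and its
   XOR-function is the normalized Hamming distance f(x + y) = |x + y| / n.

   Let P be a one-way protocol of cost c computing f^+ with error
   1/3.  Restricting Bob to the inputs y = e_i, an averaging argument fixes a
   public random string w answering 2/3 of all pairs (x, e_i) correctly.  Since
   f(x + e_i) = (|x| - 1)/n exactly when x_i = 1, Bob's answers together with
   |x| yield a guess for every bit of x, correct wherever Bob is.  A reverse
   Markov argument gives 2^n/60 strings x with at most 7n/20 wrong guesses; each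
   is determined by its message (< 2^(c+1) codes), its weight and its error set,
   so 2^n <= 60 * 2^(c+1) (n+1) |Hamming ball of radius 7n/20|.  The ball bound
   |ball_r| <= 2^r (3/2)^n then forces c >= n/100 for n >= 1000. *)

(* Real addition as a commutative monoid law, so that bigop lemmas apply to
   the sums \big[Rplus/0] occurring in the definitions. *)
HB.instance Definition _ := Monoid.isComLaw.Build R 0 Rplus
  (fun a b c => esym (Rplus_assoc a b c)) Rplus_comm Rplus_0_l.

Lemma sumR_le (T : finType) (F G : T -> R) :
  (forall i, F i <= G i) -> \big[Rplus/0]_(i : T) F i <= \big[Rplus/0]_(i : T) G i.
Proof.
move=> h; apply: (big_rec2 (fun a b => a <= b)); first lra.
move=> i a b _ hab; have := h i; lra.
Qed.

Lemma sumR_const (T : finType) (c : R) : \big[Rplus/0]_(i : T) c = INR #|T| * c.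
Proof.
rewrite big_const; elim: #|T| => [|k IH] /=; first lra.
rewrite IH; destruct k; simpl; lra.
Qed.

Lemma sumR_mulr (T : finType) (F : T -> R) (k : R) :
  \big[Rplus/0]_(i : T) (F i * k) = (\big[Rplus/0]_(i : T) F i) * k.
Proof.
apply: (big_rec2 (fun a b => a = b * k)); first lra.
move=> i a b _ ->; lra.
Qed.

Lemma sumR_if (T : finType) (c : T -> bool) (m : R) :
  \big[Rplus/0]_(i : T) (if c i then m else 0) = m * INR (\sum_(i : T) c i).
Proof.
apply: (big_rec2 (fun a b => a = m * INR b)); first by simpl; lra.
by move=> i a b _ ->; rewrite plus_INR; case: (c i) => /=; lra.
Qed.

Section NormalizedCardinality.
Variable n : nat.

Definition fcard (S : {set 'I_n}) : R := INR #|S| / INR n.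

Lemma inv_INR_ge0 : 0 <= / INR n.
Proof.
case: n => [|m]; first by rewrite /= Rinv_0; lra.
by apply/Rlt_le/Rinv_0_lt_compat/lt_0_INR/ltP.
Qed.

Lemma fcard_ge0 S : 0 <= fcard S.
Proof. exact: Rmult_le_pos (pos_INR _) inv_INR_ge0. Qed.

Lemma fcard_mono : monotone_sf fcard.
Proof.
move=> A B sAB; apply: Rmult_le_compat_r; first exact: inv_INR_ge0.
by apply/le_INR/leP/subset_leq_card.
Qed.

Lemma fcard_le1 S : fcard S <= 1.
Proof.
have := fcard_mono (subsetT S); rewrite /fcard cardsT card_ord /Rdiv.
have [->|nz] := Req_dec (INR n) 0; first by rewrite Rinv_0; lra.
by rewrite Rinv_r.
Qed.

Lemma fcard_step (S : {set 'I_n}) i :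
  fcard (i |: S) - fcard S = INR (i \notin S) / INR n.
Proof. rewrite /fcard /Rdiv cardsU1 plus_INR; ring. Qed.

Lemma fcard_lip : lipschitz_sf (1 / INR n) fcard.
Proof.
move=> S i; rewrite fcard_step Rabs_pos_eq; last first.
  exact: Rmult_le_pos (pos_INR _) inv_INR_ge0.
rewrite /Rdiv; apply: Rmult_le_compat_r; first exact: inv_INR_ge0.
by case: (i \notin S) => /=; lra.
Qed.

Lemma fcard_sub : submodular_sf fcard.
Proof.
move=> A B i sAB iB; rewrite !fcard_step.
have iA : i \notin A by apply: contra iB; apply: (subsetP sAB).
by rewrite iA iB; lra.
Qed.

End NormalizedCardinality.

Definition eqR (a b : R) : bool := if Req_EM_T a b then true else false.

Lemma eqRP (a b : R) : reflect (a = b) (eqR a b).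
Proof. by rewrite /eqR; case: Req_EM_T => h; constructor. Qed.

Definition ei (n : nat) (i : 'I_n) : F2vec n := [ffun j => j == i].

Lemma card_flip n (x : F2vec n) i :
  #|supp (addF2 x (ei i))| = if x i then (#|supp x|).-1 else (#|supp x|).+1.
Proof.
have hi : (i \in supp x) = x i by rewrite inE.
case hx: (x i).
  have -> : supp (addF2 x (ei i)) = supp x :\ i.
    apply/setP => j; rewrite !inE !ffunE.
    by case: (eqVneq j i) => [->|_]; rewrite ?hx ?addbF ?andbT.
  by rewrite (cardsD1 i (supp x)) hi hx.
have -> : supp (addF2 x (ei i)) = i |: supp x.
  apply/setP => j; rewrite !inE !ffunE.
  by case: (eqVneq j i) => [->|_]; rewrite ?hx ?addbF.
by rewrite cardsU1 hi hx.
Qed.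

Lemma fcard_flip_reveals n (x : F2vec n) (i : 'I_n) :
  eqR (xor_fun (@fcard n) x (ei i)) (INR (#|supp x|).-1 / INR n) = x i.
Proof.
have nz : INR n <> 0 by apply: not_0_INR; have := ltn_ord i; lia.
rewrite /xor_fun /fcard card_flip; case: (x i); apply/eqRP => // e.
have /INR_eq : INR (#|supp x|).+1 = INR (#|supp x|).-1.
  by apply: (Rmult_eq_reg_r (/ INR n)) => //; apply: Rinv_neq_0_compat.
lia.
Qed.

Section Derandomization.
Variables (n : nat) (P : protocol n) (F : F2vec n -> F2vec n -> R).

Definition correct (w : Omega P) (x y : F2vec n) : bool :=
  eqR (Bob w (Alice w x) y) (F x y).

Lemma exists_good_randomness (J : finType) (inp : J -> F2vec n * F2vec n) (p : R) :
  is_distribution P -> (forall j, p <= prob_correct P F (inp j).1 (inp j).2) ->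
  exists w, p * INR #|J| <= INR (\sum_(j : J) correct w (inp j).1 (inp j).2).
Proof.
move=> [mu_ge0 mu_sum1] hp.
set S := fun w => (\sum_(j : J) correct w (inp j).1 (inp j).2)%N.
have [w0 _] : exists w0 : Omega P, true.
  case: (pickP (Omega P)) => [w0 _|none]; first by exists w0.
  by move: mu_sum1; rewrite big_pred0 //; lra.
exists [arg max_(w > w0) S w].
case: arg_maxnP => // wst _ wst_max.
have average : \big[Rplus/0]_(j : J) prob_correct P F (inp j).1 (inp j).2
    = \big[Rplus/0]_(w : Omega P) (mu w * INR (S w)).
  rewrite /prob_correct exchange_big /=; apply: eq_bigr => w _.
  rewrite -sumR_if; apply: eq_bigr => j _.
  by rewrite /correct /eqR; case: Req_EM_T.
apply: (Rle_trans _ (\big[Rplus/0]_(w : Omega P) (mu w * INR (S w)))).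
  by rewrite -average Rmult_comm -sumR_const; apply: sumR_le.
apply: (Rle_trans _ (\big[Rplus/0]_(w : Omega P) (mu w * INR (S wst)))).
  apply: sumR_le => w; apply: Rmult_le_compat_l => //.
  by apply/le_INR/leP; apply: wst_max.
by rewrite sumR_mulr mu_sum1 Rmult_1_l; apply: Rle_refl.
Qed.

End Derandomization.

Local Open Scope nat_scope.

Lemma many_mostly_correct (X : finType) (n : nat) (c : X -> nat) :
  0 < n -> (forall x, c x <= n) -> 2 * n * #|X| <= 3 * \sum_(x : X) c x ->
  #|X| <= 60 * #|[set x | 13 * n <= 20 * c x]|.
Proof.
move=> npos c_le hsum; set G := [set x | _].
have per x : 20 * c x <= (if x \in G then 20 * n else 0) + 13 * n.
  rewrite inE; case: ifP => [_|/negbT]; first by have := c_le x; lia.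
  by rewrite -ltnNge; lia.
have hG : 20 * \sum_(x : X) c x <= 20 * n * #|G| + 13 * n * #|X|.
  rewrite big_distrr /= (leq_trans (leq_sum _ (fun x _ => per x))) //.
  rewrite big_split /= -big_mkcond !sum_nat_const (@eq_card _ xpredT X) //=.
  lia.
by rewrite -(leq_pmul2l npos); nia.
Qed.

Fixpoint code (s : seq bool) : nat :=
  if s is b :: s' then b + 2 * code s' else 1.

Lemma code_gt0 s : 0 < code s.
Proof. by elim: s => [|b s IH] //=; lia. Qed.

Lemma code_inj : injective code.
Proof.
elim=> [|b s IH] [|b' s'] /=.
- by [].
- by have := code_gt0 s'; case: b'; lia.
- by have := code_gt0 s; case: b; lia.
- move=> e; have eb : b = b' by move: e; case: b; case: b' => //; lia.
  by subst b'; congr (_ :: _); apply: IH; lia.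
Qed.

Lemma code_lt s : code s < 2 ^ (size s).+1.
Proof. by elim: s => [|b s IH] //=; rewrite expnS; case: b; lia. Qed.

(* Encoding argument: suppose every x in G is recovered from its message (of at
   most c bits) and its weight by a fixed guess b, up to an error set of size at
   most 7n/20.  Then x is determined by (message, weight, error set), hence G has
   at most 2^(c+1) (n+1) |ball of radius 7n/20| elements. *)
Lemma card_decodable n c (msg : F2vec n -> seq bool)
    (b : seq bool -> nat -> 'I_n -> bool) (G : {set F2vec n}) :
  (forall x, size (msg x) <= c) ->
  (forall x, x \in G -> 20 * #|[set i | x i != b (msg x) #|supp x| i]| <= 7 * n) ->
  #|G| <= 2 ^ c.+1 * n.+1 * #|[set D : {set 'I_n} | #|D| <= (7 * n) %/ 20]|.
Proof.
move=> msg_le hG.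
pose err (x : F2vec n) : {set 'I_n} := [set i | x i != b (msg x) #|supp x| i].
pose psi (x : F2vec n) := ((code (msg x), #|supp x|), err x).
have psi_inj : injective psi.
  move=> x y [/code_inj em ek eD]; apply/ffunP => i.
  have : (i \in err x) = (i \in err y) by rewrite eD.
  by rewrite !inE em ek; case: (x i); case: (y i); case: (b _ _ _).
pose ball := [set D : {set 'I_n} | #|D| <= (7 * n) %/ 20].
pose L := [seq (p, D) | p <- [seq (a, k) | a <- iota 0 (2 ^ c.+1), k <- iota 0 n.+1],
                        D <- enum ball].
have -> : #|G| = size [seq psi x | x <- enum G] by rewrite size_map cardE.
have -> : 2 ^ c.+1 * n.+1 * #|ball| = size L.
  by rewrite size_allpairs size_allpairs !size_iota cardE.
apply: uniq_leq_size; first by rewrite map_inj_uniq // enum_uniq.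
move=> z /mapP [x]; rewrite mem_enum => xG ->.
apply: allpairs_f; first apply: allpairs_f.
- rewrite mem_iota add0n (leq_trans (code_lt _)) //.
  by rewrite leq_exp2l // ltnS msg_le.
- by rewrite mem_iota add0n ltnS; have := max_card (supp x); rewrite card_ord.
- by rewrite mem_enum inE leq_divRL // mulnC hG.
Qed.

(* Counting subsets by size: sum_D 2^(n - |D|) = (2 + 1)^n. *)
Lemma sum_pow2_cocard n : \sum_(D : {set 'I_n}) 2 ^ (n - #|D|) = 3 ^ n.
Proof.
have -> : 3 ^ n = (2 + 1) ^ n by [].
rewrite expnDn.
rewrite (partition_big (fun D : {set 'I_n} => (inord #|D| : 'I_n.+1)) xpredT) //=.
apply: eq_bigr => j _; rewrite exp1n muln1.
have hD (D : {set 'I_n}) : ((inord #|D| : 'I_n.+1) == j) = (#|D| == j).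
  apply/eqP/eqP => [<-|->]; last by rewrite inord_val.
  by rewrite inordK //; have := max_card D; rewrite card_ord; lia.
rewrite (eq_bigr (fun _ => 2 ^ (n - j))); last by move=> D; rewrite hD => /eqP ->.
rewrite (eq_bigl (fun D => D \in [set D : {set 'I_n} | #|D| == j])); last first.
  by move=> D; rewrite /= hD inE.
by rewrite sum_nat_const card_draws card_ord.
Qed.

Lemma ball_bound n r :
  #|[set D : {set 'I_n} | #|D| <= r]| * 2 ^ n <= 2 ^ r * 3 ^ n.
Proof.
rewrite -sum_pow2_cocard -sum_nat_const big_distrr /= big_mkcond /=.
apply: leq_sum => D _; rewrite inE; case: ifP => // hr.
by rewrite -expnD leq_exp2l //; have := max_card D; rewrite card_ord; lia.
Qed.

Lemma poly_le_exp n : (120 * n.+1) ^ 5 <= 2 ^ ((13 + n %/ 64) * 5).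
Proof.
set s := n %/ 64.
have hs : n.+1 <= 64 * 2 ^ s.
  have := ltn_ceil n (isT : 0 < 64); rewrite -/s.
  by have := ltn_expl s (isT : 1 < 2); lia.
rewrite expnM leq_exp2r // expnD.
by have -> : 2 ^ 13 = 128 * 64 by []; lia.
Qed.

(* Volume comparison: if 4^n <= 120 (n+1) 2^(c+r) 3^n with r <= 7n/20, then the
   message length c must be linear in n (as 3^5 <= 2^8). *)
Lemma exp_growth n c r : 1000 <= n -> 20 * r <= 7 * n ->
  2 ^ n * 2 ^ n <= 120 * n.+1 * 2 ^ (c + r) * 3 ^ n -> n <= 100 * c.
Proof.
move=> hn hr hvol.
rewrite -expnD -(leq_exp2r _ _ (isT : 0 < 5)) !expnMn -!expnM in hvol.
have three5 : 3 ^ (n * 5) <= 2 ^ (8 * n) by rewrite mulnC !expnM leq_exp2r //; lia.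
have h4 : 2 ^ (2 * n) <= (120 * n.+1) ^ 5 * 2 ^ ((c + r) * 5).
  rewrite -(@leq_pmul2r (2 ^ (8 * n))) ?expn_gt0 // -expnD.
  have -> : 2 * n + 8 * n = (n + n) * 5 by lia.
  by apply: (leq_trans hvol); rewrite expnMn leq_mul.
have : 2 ^ (2 * n) <= 2 ^ ((13 + n %/ 64) * 5 + (c + r) * 5).
  by rewrite expnD (leq_trans h4) // leq_mul2r poly_le_exp orbT.
by rewrite leq_exp2l //; have := leq_trunc_div n 64; lia.
Qed.

Lemma counting_chain n c g B r :
  2 ^ n <= 60 * g -> g <= 2 ^ c.+1 * n.+1 * B -> B * 2 ^ n <= 2 ^ r * 3 ^ n ->
  2 ^ n * 2 ^ n <= 120 * n.+1 * 2 ^ (c + r) * 3 ^ n.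
Proof.
move=> h1 h2 h3.
have e1 : 2 ^ n * 2 ^ n <= 60 * (2 ^ c.+1 * n.+1 * B) * 2 ^ n.
  by rewrite leq_mul2r (leq_trans h1) ?orbT // leq_mul2l h2 orbT.
apply: (leq_trans e1); rewrite expnS expnD.
move: (2 ^ c) (2 ^ r) (3 ^ n) (2 ^ n) h3 => a b d e h3.
have -> : 60 * (2 * a * n.+1 * B) * e = (120 * n.+1 * a) * (B * e) by lia.
have -> : 120 * n.+1 * (a * b) * d = (120 * n.+1 * a) * (b * d) by lia.
by rewrite leq_mul2l h3 orbT.
Qed.

Local Open Scope R_scope.

Lemma message_size_le_cost n (P : protocol n) (w : Omega P) x :
  (size (Alice w x) <= cost P)%N.
Proof.
apply: (@leq_trans (\max_(x' : F2vec n) size (Alice w x'))); first exact: leq_bigmax.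
exact: (leq_bigmax w).
Qed.

Definition guess_bit n (P : protocol n) (w : Omega P) (m : seq bool) (k : nat)
    (i : 'I_n) : bool :=
  eqR (Bob w m (ei i)) (INR k.-1 / INR n).

Lemma guess_bit_correct n (P : protocol n) (w : Omega P) x i :
  correct (xor_fun (@fcard n)) w x (ei i) ->
  guess_bit w (Alice w x) #|supp x| i = x i.
Proof. by move=> /eqRP e; rewrite /guess_bit e fcard_flip_reveals. Qed.

Lemma guess_errors_le n (P : protocol n) (w : Omega P) (x : F2vec n) :
  (#|[set i | x i != guess_bit w (Alice w x) #|supp x| i]|
     + \sum_(i : 'I_n) correct (xor_fun (@fcard n)) w x (ei i) <= n)%N.
Proof.
set ok := [set i | correct (xor_fun (@fcard n)) w x (ei i)].
have card_ok : #|ok| = (\sum_(i : 'I_n) correct (xor_fun (@fcard n)) w x (ei i))%N.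
  rewrite -sum1_card big_mkcond; apply: eq_bigr => i _.
  by rewrite inE; case: correct.
have sub : [set i | x i != guess_bit w (Alice w x) #|supp x| i] \subset ~: ok.
  apply/subsetP => i; rewrite !inE; apply: contraNN => /guess_bit_correct ->.
  by rewrite eqxx.
have := subset_leq_card sub; have := cardsC ok; rewrite card_ord -card_ok.
lia.
Qed.

Lemma hamming_oneway_lower n (P : protocol n) :
  (1000 <= n)%N -> computes_with_error P (1 / 3) (xor_fun (@fcard n)) ->
  (n <= 100 * cost P)%N.
Proof.
move=> hn [hdist hcorr]; set F := xor_fun (@fcard n) in hcorr *.
have query_ok (j : F2vec n * 'I_n) : 2 / 3 <= prob_correct P F j.1 (ei j.2).
  by have := hcorr j.1 (ei j.2); lra.
have [w hw] := exists_good_randomness (inp := fun j => (j.1, ei j.2)) hdist query_ok.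
pose c x := (\sum_(i : 'I_n) correct F w x (ei i))%N.
have card_X : #|F2vec n| = (2 ^ n)%N by rewrite card_ffun card_bool card_ord.
have hsum : (2 * n * #|F2vec n| <= 3 * \sum_x c x)%N.
  rewrite pair_big; apply/leP/INR_le; rewrite !mult_INR card_X.
  move: hw; rewrite card_prod card_ffun card_bool !card_ord mult_INR /=.
  (* [set] identifies the convertible copies of these atoms for [lra]. *)
  by set S := INR (\sum_j _); set T := INR (2 ^ n); lra.
set G := [set x | 13 * n <= 20 * c x]%N.
have many_good : (2 ^ n <= 60 * #|G|)%N.
  rewrite -card_X; apply: many_mostly_correct hsum; first lia.
  by move=> x; rewrite /c; have := guess_errors_le w x; rewrite -/F; lia.
have few_errors (x : F2vec n) : x \in G ->
    (20 * #|[set i | x i != guess_bit w (Alice w x) #|supp x| i]| <= 7 * n)%N.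
  by rewrite inE /c => good; have := guess_errors_le w x; rewrite -/F; lia.
have decodable := card_decodable (message_size_le_cost w) few_errors.
apply: exp_growth hn _ (counting_chain many_good decodable (ball_bound _ _)).
by rewrite mulnC leq_trunc_div.
Qed.

Theorem mainTheorem12 :
  exists c1 c2 : R, 0 < c1 /\ 0 < c2 /\
  exists N : nat, forall n : nat, (N <= n)%nat ->
    exists f : {set 'I_n} -> R,
      monotone_sf f /\
      (forall S, 0 <= f S /\ f S <= 1) /\
      lipschitz_sf (c1 / INR n) f /\
      submodular_sf f /\
      oneway_cc_ge (1 / 3) (xor_fun f) (c2 * INR n).
Proof.
exists 1, (1 / 100); split; first lra; split; first lra.
exists 1000%N => n hn; exists (@fcard n).
split; first exact: fcard_mono.
split; first by move=> S; split; [exact: fcard_ge0 | exact: fcard_le1].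
split; first exact: fcard_lip.
split; first exact: fcard_sub.
move=> P /(hamming_oneway_lower hn) /leP /le_INR.
rewrite mult_INR; have -> : INR 100 = 100 by simpl; lra.
lra.
Qed.
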